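(* For every $\varepsilon\in[0,N)$, writing $C(0,r)=\{\zeta\in\mathbb C:|\zeta|=r\}$ and $F(\zeta)=\frac1N\mathrm{tr}\Big(\frac{1-\zeta}{N-\zeta(N-2+2Q)}\Big)$, \[ \min_{\zeta\in C(0,1-\varepsilon/N)}|F(\zeta)|=\frac1{N^2}\mathrm{tr}\left(\frac{\varepsilon}{2-2Q+\varepsilon-\frac{\varepsilon}N(2-2Q)}\right),\qquad \max_{\zeta\in C(0,1-\varepsilon/N)}|F(\zeta)|=\frac1{N^2}\mathrm{tr}\left(\frac{2-\frac\varepsilon N}{1+(1-\frac\varepsilon N)(1-\frac2N+\frac{2Q}N)}\right), \] and the minimum and maximum are attained at $\zeta=1-\varepsilon/N$ and $\zeta=-(1-\varepsilon/N)$ respectively. Here, for each eigenvalue $q$ of $Q$, the scalar function $\zeta\mapsto\frac{1-\zeta}{N-\zeta(N-2+2q)}$ is defined at its removable singularity in the natural way (for $q=1$ it equals the constant $1/N$), and when $\varepsilon=0$ the right-hand side of the minimum formula is read as $1/N^2$.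
   Context: $E$ is a finite set with $N=\#E>8$ elements; $Q$ is an irreducible stochastic matrix on $E$ with $Q(x,y)=Q(y,x)$ for all $x,y$ and $\mathrm{tr}(Q)=0$. For a function $f$ defined on the spectrum of $Q$ (which lies in $[-1,1]$), $f(Q)$ is defined by functional calculus, so $\mathrm{tr}(f(Q))=\sum_q f(q)$ over eigenvalues $q$ of $Q$ counted with multiplicity; fractions of the form $\frac{a(Q)}{b(Q)}$ mean $f(Q)$ with $f(q)=a(q)/b(q)$. *)

From HB Require Import structures.
From mathcomp Require Import all_boot all_order all_algebra.
Set Implicit Arguments. Unset Strict Implicit. Unset Printing Implicit Defensive.
Import Order.TTheory GRing.Theory Num.Theory.
Local Open Scope ring_scope.

(* E is modelled as 'I_N; Q is a matrix with entries in a numeric closed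
   field C (e.g. the complex numbers); nonnegativity 0 <= Q x y forces
   entries to be real. *)

Definition stochastic (C : numClosedFieldType) (N : nat) (Q : 'M[C]_N) : Prop :=
  (forall x y, 0 <= Q x y) /\ (forall x, \sum_y Q x y = 1).

Definition irreducible (C : numClosedFieldType) (N : nat) (Q : 'M[C]_N) : Prop :=
  forall x y, exists n : nat, 0 < (Q ^+ n) x y.

Definition Fscal (C : numClosedFieldType) (N : nat) (q zeta : C) : C :=
  if q == 1 then N%:R^-1
  else (1 - zeta) / (N%:R - zeta * (N%:R - 2 + 2 * q)).

(* F(zeta) = (1/N) tr f(Q) = (1/N) sum over eigenvalues (with multiplicity) *)
Definition Ffun (C : numClosedFieldType) (N : nat) (s : seq C) (zeta : C) : C :=
  N%:R^-1 * \sum_(q <- s) Fscal N q zeta.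

Definition minval (C : numClosedFieldType) (N : nat) (s : seq C) (eps : C) : C :=
  if eps == 0 then (N%:R ^+ 2)^-1
  else (N%:R ^+ 2)^-1 *
       \sum_(q <- s) eps / (2 - 2 * q + eps - eps / N%:R * (2 - 2 * q)).

Definition maxval (C : numClosedFieldType) (N : nat) (s : seq C) (eps : C) : C :=
  (N%:R ^+ 2)^-1 *
  \sum_(q <- s) (2 - eps / N%:R) /
                (1 + (1 - eps / N%:R) * (1 - 2 / N%:R + 2 * q / N%:R)).

From HB Require Import structures.
From mathcomp Require Import all_boot all_order all_algebra.
From mathcomp Require Import ring.
Import Order.TTheory GRing.Theory Num.Theory.
Local Open Scope ring_scope.
Set Implicit Arguments. Unset Strict Implicit.

(* The spectrum of Q is real (Q is real symmetric), lies in [-1, 1] (Q is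
   stochastic) and contains 1 exactly once: a row vector fixed by Q has
   vanishing Dirichlet form sum_{k,j} Q k j |v k - v j|^2, so it is constant
   on edges and, by irreducibility, constant; two distinct rows of a unitary
   matrix cannot both be constant.
   For real q in [-1, 1] and |z| = r, put a = N - 2 + 2q; then
   |N - z a| >= N - r a > 0.  Each summand of F is 1/N minus a term whose
   modulus is largest at z = r, which gives the minimum.  The maximum follows
   summand by summand from |f_q(z)| <= f_q(-r), a polynomial inequality in z
   and its conjugate once |z|^2 = r^2 is used. *)

Lemma char_poly_conj (R : comUnitRingType) n (P A : 'M[R]_n) : P \in unitmx ->
  char_poly (invmx P *m A *m P) = char_poly A.
Proof.
move=> P_unit; rewrite /char_poly /char_poly_mx.
have -> : 'X%:M - map_mx polyC (invmx P *m A *m P) =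
    map_mx polyC (invmx P) *m ('X%:M - map_mx polyC A) *m map_mx polyC P.
  rewrite mulmxBr mulmxBl !map_mxM; congr (_ - _).
  rewrite -mulmxA mul_scalar_mx -scalemxAr -map_mxM mulVmx //.
  by rewrite map_mx1 scalemx1.
rewrite !det_mulmx !det_map_mx mulrC mulrA -rmorphM -det_mulmx mulmxV //.
by rewrite det1 rmorph1 mul1r.
Qed.

Lemma normalmx_char_poly (C : numClosedFieldType) n (A : 'M[C]_n) :
  A \is normalmx -> char_poly A = \prod_(i < n) ('X - (spectral_diag A 0 i)%:P).
Proof.
move=> /orthomx_spectralP A_spec; rewrite [in LHS]A_spec char_poly_conj ?spectral_unit //.
rewrite char_poly_trig ?diag_mx_is_trig //.
by apply: eq_bigr => i _; rewrite mxE eqxx mulr1n.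
Qed.

Lemma row_spectralmx_eigen (C : numClosedFieldType) n (A : 'M[C]_n) i :
  A \is normalmx ->
  row i (spectralmx A) *m A = spectral_diag A 0 i *: row i (spectralmx A).
Proof.
move=> /orthomx_spectralP; set P := spectralmx A => A_spec.
have PA : P *m A = diag_mx (spectral_diag A) *m P.
  by rewrite [in LHS]A_spec !mulmxA mulmxV ?spectral_unit // mul1mx.
by rewrite -row_mul PA row_mul row_diag_mx -scalemxAl -rowE.
Qed.

Lemma unitarymx_const_rows (C : numClosedFieldType) m n (M : 'M[C]_(m, n))
    (i k : 'I_m) (j0 : 'I_n) :
  M \is unitarymx -> (forall j, M i j = M i j0) -> (forall j, M k j = M k j0) ->
  i = k.
Proof.
move=> /unitarymxP M_unitary Mi_const Mk_const; apply/eqP/negP => /negP i_neq_k.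
have dot i' k' : \sum_j M i' j * (M k' j)^* = (i' == k')%:R.
  have /matrixP/(_ i' k') := M_unitary; rewrite !mxE => <-.
  by apply: eq_bigr => j _; rewrite !mxE.
have dot_const i' k' : (forall j, M i' j = M i' j0) -> (forall j, M k' j = M k' j0) ->
    M i' j0 * (M k' j0)^* *+ n = (i' == k')%:R.
  move=> Mi'_const Mk'_const; rewrite -(dot i' k').
  under eq_bigr do rewrite Mi'_const Mk'_const.
  by rewrite sumr_const card_ord.
have norm_i := dot_const i i Mi_const Mi_const.
have norm_k := dot_const k k Mk_const Mk_const.
have n_neq0 : (n == 0)%N = false.
  by apply/negbTE; rewrite -lt0n (leq_ltn_trans (leq0n _) (ltn_ord j0)).
move/eqP: (dot_const i k Mi_const Mk_const); rewrite (negbTE i_neq_k).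
rewrite mulrn_eq0 n_neq0 /= mulf_eq0 conjC_eq0 => /orP[]/eqP Mj0.
- by move: norm_i; rewrite Mj0 mul0r mul0rn eqxx => /esym/eqP; rewrite oner_eq0.
- by move: norm_k; rewrite Mj0 mul0r mul0rn eqxx => /esym/eqP; rewrite oner_eq0.
Qed.

Section SymmetricStochastic.
Variables (C : numClosedFieldType) (N : nat) (Q : 'M[C]_N).
Hypothesis Q_stoch : stochastic Q.

Lemma stochastic_eigenvalue_le1 (v : 'rV_N) a : v != 0 -> v *m Q = a *: v ->
  `|a| <= 1.
Proof.
move=> v_neq0 v_eigen.
pose S := \sum_j `|v 0 j|.
have S_gt0 : 0 < S.
  rewrite lt0r sumr_ge0 // andbT; apply: contra v_neq0 => /eqP S0.
  apply/eqP/rowP => j; rewrite mxE; apply/eqP; rewrite -normr_eq0; apply/eqP.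
  by apply: (psumr_eq0P _ S0).
have aS : `|a| * S = \sum_j `|\sum_k v 0 k * Q k j|.
  rewrite mulr_sumr; apply: eq_bigr => j _.
  have /rowP/(_ j) := v_eigen; rewrite !mxE => ->.
  by rewrite normrM.
rewrite -(ler_pM2r S_gt0) mul1r aS.
apply: le_trans (_ : \sum_j \sum_k `|v 0 k| * Q k j <= _).
  apply: ler_sum => j _; apply: le_trans (ler_norm_sum _ _ _) _.
  by apply: ler_sum => k _; rewrite normrM (ger0_norm (Q_stoch.1 k j)).
rewrite exchange_big (eq_bigr (fun k => `|v 0 k|)) // => k _.
by rewrite -mulr_sumr Q_stoch.2 mulr1.
Qed.

Hypothesis Q_sym : Q^T = Q.

Lemma stochastic_sym k j : Q k j = Q j k.
Proof. by rewrite -{1}Q_sym mxE. Qed.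

Lemma stochastic_col_sum j : \sum_k Q k j = 1.
Proof. by rewrite -(Q_stoch.2 j); apply: eq_bigr => k _; rewrite stochastic_sym. Qed.

Lemma dirichlet_fixed (v : 'rV[C]_N) : v *m Q = v ->
  \sum_k \sum_j Q k j * `|v 0 k - v 0 j| ^+ 2 = 0.
Proof.
move=> v_fixed; pose x k := v 0 k.
have vE j : \sum_k x k * Q k j = x j.
  by have /rowP/(_ j) := v_fixed; rewrite mxE.
(* Each of the four double sums obtained by expanding |x k - x j|^2 equals
   \sum_k |x k|^2. *)
have T1 : \sum_k \sum_j Q k j * (x k * (x k)^*) = \sum_k x k * (x k)^*.
  by apply: eq_bigr => k _; rewrite -mulr_suml Q_stoch.2 mul1r.
have T2 : \sum_k \sum_j Q k j * (x k * (x j)^*) = \sum_j x j * (x j)^*.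
  rewrite exchange_big; apply: eq_bigr => j _.
  rewrite -{2}vE mulr_suml; apply: eq_bigr => k _; ring.
have T3 : \sum_k \sum_j Q k j * (x j * (x k)^*) = \sum_k x k * (x k)^*.
  apply: eq_bigr => k _; rewrite -{2}vE mulr_suml.
  by apply: eq_bigr => j _; rewrite stochastic_sym; ring.
have T4 : \sum_k \sum_j Q k j * (x j * (x j)^*) = \sum_j x j * (x j)^*.
  rewrite exchange_big; apply: eq_bigr => j _.
  by rewrite -mulr_suml stochastic_col_sum mul1r.
have expand k j : Q k j * `|x k - x j| ^+ 2 =
    Q k j * (x k * (x k)^*) - Q k j * (x k * (x j)^*) -
    Q k j * (x j * (x k)^*) + Q k j * (x j * (x j)^*).
  by rewrite normCK rmorphB /=; ring.
under eq_bigr do under eq_bigr do rewrite expand.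
under eq_bigr do rewrite big_split /= !sumrB.
by rewrite big_split /= !sumrB T1 T2 T3 T4 subrr sub0r addNr.
Qed.

Lemma fixed_row_edge (v : 'rV[C]_N) k j : v *m Q = v -> Q k j != 0 ->
  v 0 k = v 0 j.
Proof.
move=> v_fixed Qkj_neq0.
have term_ge0 k' j' : 0 <= Q k' j' * `|v 0 k' - v 0 j'| ^+ 2.
  by rewrite mulr_ge0 ?exprn_ge0 ?Q_stoch.1.
have row_k : \sum_j' Q k j' * `|v 0 k - v 0 j'| ^+ 2 = 0.
  by apply: (psumr_eq0P _ (dirichlet_fixed v_fixed)) => // k' _; exact: sumr_ge0.
have /eqP := psumr_eq0P (fun j' _ => term_ge0 k j') row_k (i := j) isT.
by rewrite mulf_eq0 (negbTE Qkj_neq0) expf_eq0 normr_eq0 subr_eq0 => /eqP.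
Qed.

Lemma stochastic_root_char1 : (0 < N)%N -> root (char_poly Q) 1.
Proof.
move=> N_gt0; rewrite -eigenvalue_root_char; apply/eigenvalueP; exists (const_mx 1).
  apply/rowP => j; rewrite !mxE mulr1 -[RHS](stochastic_col_sum j).
  by apply: eq_bigr => k _; rewrite mxE mul1r.
by apply/eqP => /rowP/(_ (Ordinal N_gt0)); rewrite !mxE; apply/eqP; rewrite oner_eq0.
Qed.

Hypothesis Q_irr : irreducible Q.

Lemma fixed_row_const (v : 'rV[C]_N) k j : v *m Q = v -> v 0 k = v 0 j.
Proof.
move=> v_fixed; have [m /lt0r_neq0] := Q_irr k j.
elim: m k => [|m IHm] k.
  by rewrite expr0 mxE; case: (k =P j) => [->|_] //; rewrite mulr0n eqxx.
rewrite exprS -mulmxE mxE => sum_neq0.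
have [l] : exists l, Q k l * (Q ^+ m) l j != 0.
  apply/existsP; apply: contraTT sum_neq0 => /existsPn all0.
  by rewrite negbK big1 // => l _; have /negPn/eqP := all0 l.
rewrite mulf_eq0 negb_or => /andP[Qkl_neq0 Qm_lj_neq0].
by rewrite (fixed_row_edge v_fixed Qkl_neq0) IHm.
Qed.

Lemma sym_stochastic_hermitian : Q \is hermsymmx.
Proof.
apply: realsym_hermsym; first by rewrite qualifE /= expr0 scale1r map_mx_id // Q_sym.
by apply/mxOverP => i j; apply: ger0_real; exact: Q_stoch.1.
Qed.

Let Q_normal : Q \is normalmx := hermitian_normalmx sym_stochastic_hermitian.
Local Notation P := (spectralmx Q).
Local Notation d := (spectral_diag Q).

Variable s : seq C.
Hypothesis Q_char : char_poly Q = \prod_(q <- s) ('X - q%:P).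

Lemma perm_eq_spectrum : perm_eq s [seq d 0 i | i <- index_enum 'I_N].
Proof. by apply: prod_XsubC_eq; rewrite -Q_char normalmx_char_poly // big_map. Qed.

Lemma spectrum_real_le1 : {in s, forall q, q \is Num.real /\ `|q| <= 1}.
Proof.
move=> q; rewrite (perm_mem perm_eq_spectrum) => /mapP[i _ ->]; split.
  exact: mxOverP (hermitian_spectral_diag_real sym_stochastic_hermitian) 0 i.
apply: stochastic_eigenvalue_le1 (row_spectralmx_eigen i Q_normal).
have : row_free P by rewrite row_free_unit spectral_unit.
by apply: contraL => /eqP row_i0; apply/row_freePn; exists i; rewrite row_i0 sub0mx.
Qed.

Lemma count_spectrum1 : (0 < N)%N -> count_mem 1 s = 1%N.
Proof.
move=> N_gt0; pose j0 := Ordinal N_gt0.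
rewrite (permP perm_eq_spectrum) count_map.
have -> : count (preim (d 0) (pred1 1)) (index_enum 'I_N) = #|[pred i | d 0 i == 1]|.
  by rewrite cardE /enum_mem size_filter.
apply/eqP; rewrite eqn_leq; apply/andP; split.
  apply/card_le1_eqP => i k; rewrite !inE => /eqP di /eqP dk.
  have row_const l : d 0 l = 1 -> forall j, P l j = P l j0.
    move=> dl j; have := @fixed_row_const (row l P) j j0.
    by rewrite !mxE; apply; rewrite row_spectralmx_eigen // dl scale1r.
  exact: unitarymx_const_rows (spectral_unitarymx Q) (row_const k dk) (row_const i di).
move: (stochastic_root_char1 N_gt0); rewrite Q_char root_prod_XsubC (perm_mem perm_eq_spectrum).
by case/mapP => i _ di; apply/card_gt0P; exists i; rewrite inE -di.
Qed.

End SymmetricStochastic.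

Definition Fgap (C : numClosedFieldType) (N : nat) (q z : C) : C :=
  if q == 1 then 0
  else (2 - 2 * q) * z / (N%:R * (N%:R - z * (N%:R - 2 + 2 * q))).

Section ScalarExtremes.
Variables (C : numClosedFieldType) (N : nat).
Hypothesis N_gt4 : (4 < N)%N.
Local Notation n := (N%:R : C).

Lemma n_gt0 : 0 < n.
Proof. by rewrite ltr0n; apply: leq_trans N_gt4. Qed.

Lemma n_neq0 : n != 0.
Proof. by rewrite gt_eqF // n_gt0. Qed.

Lemma invn_ge0 : 0 <= n^-1.
Proof. by rewrite invr_ge0 ler0n. Qed.

Variables (q eps : C).
Hypotheses (q_real : q \is Num.real) (q_le1 : `|q| <= 1).
Hypotheses (eps_ge0 : 0 <= eps) (eps_lt : eps < n).
Local Notation r := (1 - eps / n).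
Local Notation a := (n - 2 + 2 * q).

Lemma subq_ge0 : 0 <= 1 - q.
Proof. by move: q_le1; rewrite real_ler_norml // subr_ge0 => /andP[]. Qed.

Lemma addq_ge0 : 0 <= 1 + q.
Proof.
move: q_le1; rewrite real_ler_norml // => /andP[Nq _].
by rewrite addrC -[1]opprK subr_ge0.
Qed.

Lemma epsn_ge0 : 0 <= eps / n.
Proof. by rewrite divr_ge0 // ltW // n_gt0. Qed.

Lemma r_gt0 : 0 < r.
Proof. by rewrite subr_gt0 ltr_pdivrMr ?n_gt0 // mul1r. Qed.

Lemma a_gt0 : 0 < a.
Proof.
have n_gt4 : 0 < n - 4 by rewrite subr_gt0 ltr_nat.
have -> : a = (n - 4) + 2 * (1 + q) by ring.
by rewrite ltr_wpDr // mulr_ge0 // addq_ge0.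
Qed.

Lemma den_r_gt0 : q != 1 -> 0 < n - r * a.
Proof.
move=> q_neq1.
have -> : n - r * a = eps + 2 * (1 - q) * r by field; rewrite n_neq0.
have subq_gt0 : 0 < 1 - q by rewrite lt0r subq_ge0 andbT subr_eq0 eq_sym.
by rewrite ltr_wpDl // !mulr_gt0 ?r_gt0.
Qed.

Lemma den_circle_ge z : `|z| = r -> n - r * a <= `|n - z * a|.
Proof.
move=> z_r; have := lerB_dist n (z * a).
by rewrite normrM z_r normr_nat (gtr0_norm a_gt0).
Qed.

Lemma den_circle_gt0 z : q != 1 -> `|z| = r -> 0 < `|n - z * a|.
Proof.
by move=> q_neq1 z_r; rewrite (lt_le_trans _ (den_circle_ge z_r)) ?den_r_gt0.
Qed.

Lemma Fscal_circle z : `|z| = r -> Fscal N q z = n^-1 - Fgap N q z.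
Proof.
rewrite /Fscal /Fgap; case: eqP => [_ _|/eqP q_neq1 z_r]; first by rewrite subr0.
have den_neq0 : n - z * a != 0 by rewrite -normr_gt0 den_circle_gt0.
by field; rewrite den_neq0 n_neq0.
Qed.

Lemma norm_Fgap_le z : `|z| = r -> `|Fgap N q z| <= Fgap N q r.
Proof.
rewrite /Fgap; case: eqP => [_ _|/eqP q_neq1 z_r]; first by rewrite normr0.
have two_subq_ge0 : 0 <= 2 - 2 * q.
  by rewrite (_ : 2 - 2 * q = 2 * (1 - q)) ?mulr_ge0 ?subq_ge0 //; ring.
rewrite normf_div !normrM z_r (ger0_norm two_subq_ge0) normr_nat.
rewrite ler_wpM2l ?mulr_ge0 ?(ltW r_gt0) //.
rewrite lef_pV2 ?posrE ?mulr_gt0 ?n_gt0 ?den_r_gt0 ?den_circle_gt0 //.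
by rewrite ler_wpM2l ?(ltW n_gt0) ?den_circle_ge.
Qed.

Lemma Fscal_r_ge0 : 0 <= Fscal N q r.
Proof.
rewrite /Fscal; case: eqP => [_|/eqP q_neq1]; first exact: invn_ge0.
by rewrite subKr divr_ge0 ?epsn_ge0 // ltW // den_r_gt0.
Qed.

Lemma Fscal_r : eps != 0 -> Fscal N q r = eps / (n * (n - r * a)).
Proof.
move=> eps_neq0; rewrite /Fscal; case: eqP => [->|_].
  have -> : n - r * (n - 2 + 2 * 1) = eps by field; rewrite n_neq0.
  by rewrite invfM mulrCA divff ?mulr1.
by rewrite subKr invfM mulrA.
Qed.

Lemma den_Nr_gt0 : 0 < n + r * a.
Proof. by rewrite ltr_wpDr ?n_gt0 // mulr_ge0 ?(ltW r_gt0) ?(ltW a_gt0). Qed.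

Lemma Fscal_Nr : Fscal N q (- r) = (1 + r) / (n + r * a).
Proof.
rewrite /Fscal; case: eqP => [->|_]; last by rewrite opprK mulNr opprK.
have -> : n + r * (n - 2 + 2 * 1) = n * (1 + r) by ring.
by rewrite invfM mulrCA divff ?mulr1 // gt_eqF // addr_gt0 ?ltr01 ?r_gt0.
Qed.

Lemma Fscal_Nr_ge0 : 0 <= Fscal N q (- r).
Proof.
have r_ge0 := ltW r_gt0.
by rewrite Fscal_Nr divr_ge0 ?(ltW den_Nr_gt0) // addr_ge0 ?ler01.
Qed.

Lemma ar2_le_n : a * r ^+ 2 <= n.
Proof.
rewrite -subr_ge0.
have -> : n - a * r ^+ 2 = eps * (1 + r) + 2 * (1 - q) * r ^+ 2.
  by field; rewrite n_neq0.
have r_ge0 := ltW r_gt0.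
apply: addr_ge0; apply: mulr_ge0 => //; last exact: exprn_ge0.
  by rewrite addr_ge0 ?ler01.
by rewrite mulr_ge0 ?subq_ge0.
Qed.

Lemma norm_Fscal_le z : `|z| = r -> `|Fscal N q z| <= Fscal N q (- r).
Proof.
move=> z_r; have [->|q_neq1] := eqVneq q 1.
  by rewrite /Fscal eqxx ger0_norm ?invn_ge0.
rewrite Fscal_Nr /Fscal (negbTE q_neq1).
have r_real : r^* = r by rewrite conj_Creal // gtr0_real ?r_gt0.
have a_real : a^* = a by rewrite conj_Creal // gtr0_real ?a_gt0.
have r_ge0 := ltW r_gt0.
have r1_ge0 : 0 <= 1 + r by rewrite addr_ge0 ?ler01.
rewrite normf_div ler_pdivrMr ?den_circle_gt0 // mulrAC ler_pdivlMr ?den_Nr_gt0 //.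
rewrite -ler_sqr ?nnegrE ?mulr_ge0 ?normr_ge0 ?(ltW den_Nr_gt0) //.
rewrite !exprMn !normCK !rmorphB /= rmorph1 rmorphM /= rmorph_nat a_real.
rewrite -subr_ge0 -(pmulr_rge0 _ r_gt0).
(* Multiplied by r, the difference of the squared moduli is a nonnegative
   multiple of |z + r|^2 plus a multiple of |z|^2 - r^2 = 0. *)
have -> : r * ((1 + r) ^+ 2 * ((n - z * a) * (n - z^* * a)) -
               (1 - z) * (1 - z^*) * (n + r * a) ^+ 2) =
  2 * (1 - q) * (n - a * r ^+ 2) * ((z + r) * (z + r)^*) +
  (r * a ^+ 2 + r ^+ 2 * a ^+ 2 - r * n ^+ 2 - n * a * r ^+ 2 - n ^+ 2 + a * n)
    * (z * z^* - r ^+ 2).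
  by rewrite rmorphD /= r_real; ring.
have zz : z * z^* = r ^+ 2 by rewrite -normCK z_r.
rewrite zz subrr mulr0 addr0 -normCK.
by rewrite !mulr_ge0 ?subq_ge0 ?subr_ge0 ?ar2_le_n ?exprn_ge0 ?normr_ge0.
Qed.

End ScalarExtremes.

Section SpectralSums.
Variables (C : numClosedFieldType) (N : nat).
Hypothesis N_gt4 : (4 < N)%N.
Local Notation n := (N%:R : C).
Variables (s : seq C) (eps : C).
Hypothesis s_real_le1 : {in s, forall q, q \is Num.real /\ `|q| <= 1}.
Hypotheses (eps_ge0 : 0 <= eps) (eps_lt : eps < n).
Local Notation r := (1 - eps / n).

Lemma Ffun_circle z : `|z| = r ->
  Ffun N s z = n^-1 * (\sum_(q <- s) n^-1 - \sum_(q <- s) Fgap N q z).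
Proof.
move=> z_r; rewrite /Ffun -sumrB; congr (_ * _).
apply: eq_big_seq => q /s_real_le1[q_real q_le1].
exact: Fscal_circle z_r.
Qed.

Lemma Ffun_r_le z : `|z| = r -> Ffun N s r <= `|Ffun N s z|.
Proof.
move=> z_r; have r_r : `|r| = r by rewrite gtr0_norm // (r_gt0 N_gt4 eps_lt).
rewrite (Ffun_circle z_r) (Ffun_circle r_r) normrM normfV normr_nat.
rewrite ler_wpM2l ?invn_ge0 //; apply: le_trans (lerB_dist _ _).
have sum_ge0 : 0 <= \sum_(q <- s) n^-1 by rewrite sumr_ge0 // => _ _; exact: invn_ge0.
rewrite ger0_norm // lerB // (le_trans (ler_norm_sum _ _ _)) // big_seq [leRHS]big_seq.
by apply: ler_sum => q /s_real_le1[q_real q_le1]; apply: norm_Fgap_le.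
Qed.

Lemma norm_Ffun_le z : `|z| = r -> `|Ffun N s z| <= Ffun N s (- r).
Proof.
move=> z_r; rewrite /Ffun normrM normfV normr_nat ler_wpM2l ?invn_ge0 //.
rewrite (le_trans (ler_norm_sum _ _ _)) // big_seq [leRHS]big_seq.
by apply: ler_sum => q /s_real_le1[q_real q_le1]; apply: norm_Fscal_le.
Qed.

Lemma Ffun_r_ge0 : 0 <= Ffun N s r.
Proof.
rewrite /Ffun mulr_ge0 ?invn_ge0 // big_seq sumr_ge0 // => q /s_real_le1[q_real q_le1].
exact: Fscal_r_ge0.
Qed.

Lemma Ffun_Nr_ge0 : 0 <= Ffun N s (- r).
Proof.
rewrite /Ffun mulr_ge0 ?invn_ge0 // big_seq sumr_ge0 // => q /s_real_le1[q_real q_le1].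
exact: Fscal_Nr_ge0.
Qed.

Lemma Ffun_Nr : Ffun N s (- r) = maxval N s eps.
Proof.
rewrite /Ffun /maxval mulr_sumr [RHS]mulr_sumr.
apply: eq_big_seq => q /s_real_le1[q_real q_le1].
have n_neq0 := n_neq0 C N_gt4.
have den_neq0 := lt0r_neq0 (den_Nr_gt0 N_gt4 q_real q_le1 eps_lt).
have -> : 2 - eps / n = 1 + r by ring.
have -> : 1 + r * (1 - 2 / n + 2 * q / n) = (n + r * (n - 2 + 2 * q)) / n.
  by field.
(* Abstracting the denominator keeps [field] from expanding it. *)
rewrite Fscal_Nr //; move: (n + _) den_neq0 => D D_neq0.
by field; rewrite n_neq0 D_neq0.
Qed.

Lemma Ffun_r : count_mem 1 s = 1%N -> Ffun N s r = minval N s eps.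
Proof.
move=> count1; have n_neq0 := n_neq0 C N_gt4.
rewrite /minval; case: eqP => [->|/eqP eps_neq0].
  rewrite mul0r subr0 /Ffun (eq_bigr (fun q => if q == 1 then n^-1 else 0)).
    by rewrite -big_mkcond /= big_const_seq count1 /= addr0 expr2 invfM.
  by move=> q _; rewrite /Fscal; case: eqP => // _; rewrite subrr mul0r.
rewrite /Ffun mulr_sumr [RHS]mulr_sumr; apply: eq_bigr => q _.
have -> : 2 - 2 * q + eps - eps / n * (2 - 2 * q) = n - r * (n - 2 + 2 * q).
  by field.
by rewrite Fscal_r // expr2 !invfM; ring.
Qed.

End SpectralSums.

Theorem lemma3p6 (C : numClosedFieldType) (N : nat) (Q : 'M[C]_N) (s : seq C)
    (eps : C) :
  (8 < N)%N ->
  stochastic Q -> irreducible Q -> Q^T = Q -> \tr Q = 0 ->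
  char_poly Q = \prod_(q <- s) ('X - q%:P) ->
  0 <= eps -> eps < N%:R ->
  let r := 1 - eps / N%:R in
  (forall zeta : C, `|zeta| = r ->
     minval N s eps <= `|Ffun N s zeta| <= maxval N s eps) /\
  `|Ffun N s r| = minval N s eps /\
  `|Ffun N s (- r)| = maxval N s eps.
Proof.
move=> N_gt8 Q_stoch Q_irr Q_sym _ Q_char eps_ge0 eps_lt r.
have N_gt4 : (4 < N)%N by apply: ltn_trans N_gt8.
have s_spec := spectrum_real_le1 Q_stoch Q_sym Q_char.
have N_gt0 : (0 < N)%N by apply: leq_trans N_gt4.
have Fr := Ffun_r N_gt4 eps (count_spectrum1 Q_stoch Q_sym Q_irr Q_char N_gt0).
have FNr := Ffun_Nr N_gt4 s_spec eps_lt.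
split; first by move=> z z_r; rewrite -Fr -FNr Ffun_r_le ?norm_Ffun_le.
by rewrite !ger0_norm ?Ffun_r_ge0 ?Ffun_Nr_ge0 ?Fr ?FNr.
Qed.
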